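(* Let $\mathcal{R}=(G_0,e\to R)$ be an expanding replacement system with rearrangement group $\mathcal{G}$ of $X(G_0)$. The action of $\mathcal{G}$ on the directed graph $K^1(\mathcal{G})$ is proper; in particular, for any vertex $[f]$ of $K^1(\mathcal{G})$ with $f\colon X(G_0)\to X(G)$, the stabilizer of $[f]$ in $\mathcal{G}$ is isomorphic to the automorphism group of the directed graph $G$.
   Context: A graph is a finite directed multigraph (loops, multiple edges allowed); isomorphisms preserve directions. The replacement rule $e\to R$: $e$ a non-loop edge from $v$ to $w$, $R$ a graph containing $v,w$ (initial, terminal vertices). Replacing an edge $\varepsilon$ of a graph $G$: delete $\varepsilon$, glue in a copy of $R$ identifying initial/terminal vertices with those of $\varepsilon$; new edges $\varepsilon\zeta$ ($\zeta\in E(R)$). For a set $S$ of edges of $G$, $G\triangleleft S$ is obtained by replacing each edge of $S$; an expansion of $G$ is a graph obtained by finitely many replacements. $\mathcal{R}$ expanding means: $G_0$ and $R$ have no isolated vertices, initial and terminal vertices of $R$ are not adjacent, $R$ has $\ge3$ vertices and $\ge2$ edges. For any graph $G$, $X(G)$ is the limit space of $(G,e\to R)$: $X(G)=\Omega_G/\sim$ where $\Omega_G=E(G)\times E(R)^{\mathbb{N}}$ and $\varepsilon_0\varepsilon_1\cdots\sim\varepsilon_0'\varepsilon_1'\cdots$ iff for all $n$ the edges $\varepsilon_0\cdots\varepsilon_n$, $\varepsilon_0'\cdots\varepsilon_n'$ of the $n$-fold full expansion of $G$ share a vertex. For an edge $\epsilon$ of an expansion of $G$, the cell $C(\epsilon)\subseteq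 X(G)$ is the image of the sequences with prefix $\epsilon$. For cells $C(\epsilon)\subseteq X(G)$, $C(\epsilon')\subseteq X(G')$ with $\epsilon,\epsilon'$ both loops or both non-loops, the canonical homeomorphism is induced by $\epsilon\zeta_1\zeta_2\cdots\mapsto\epsilon'\zeta_1\zeta_2\cdots$. A rearrangement $X(G)\to X(G')$ is a homeomorphism restricting to canonical homeomorphisms on the cells of some finite cover of $X(G)$ by cells with disjoint interiors (interior = cell minus images of endpoints of $\epsilon$); $\mathcal{G}$ is the group of rearrangements $X(G_0)\to X(G_0)$. For a graph isomorphism $\varphi\colon G_1\to G_2$, the base isomorphism $X(G_1)\to X(G_2)$ maps each $C(\epsilon)$ ($\epsilon\in E(G_1)$) canonically onto $C(\varphi(\epsilon))$. $x_S\colon X(G)\to X(G\triangleleft S)$ is the rearrangement mapping each cell $C(\epsilon)\subseteq X(G)$, $\epsilon$ an edge of $G\triangleleft S$, canonically onto the cell $C(\epsilon)\subseteq X(G\triangleleft S)$. A simple expansion morphism is $\varphi\circ x_{\{\epsilon\}}$ with $\varphi$ a base isomorphism. Rearrangements $f\colon X(G)\to X(G_1)$ and $g\colon X(G)\to X(G_2)$ are range equivalent if $g=\varphi\circ f$ for a base isomorphism $\varphi$; $[f]$ is the class. $K^1(\mathcal{G})$ is the directed graph whose vertices are range-equivalence classes of rearrangements with domain $X(G_0)$, with an edge from $[f]$ to $[g]$ when $g=x\circ f$ for some simple expansion morphism $x$. $\mathcal{G}$ acts by $[f]\cdot g=[f\circ g]$. *)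

From HB Require Import structures.
From mathcomp Require Import all_boot.

Set Implicit Arguments.
Unset Strict Implicit.
Unset Printing Implicit Defensive.

Record graph := Graph {
  V : finType;
  E : finType;
  src : E -> V;
  tgt : E -> V
}.

Definition isolated (G : graph) (x : V G) : Prop :=
  forall e : E G, src e <> x /\ tgt e <> x.

Definition no_isolated (G : graph) : Prop := forall x : V G, ~ isolated x.

Definition is_iso (G1 G2 : graph) (fv : V G1 -> V G2) (fe : E G1 -> E G2) : Prop :=
  [/\ bijective fv, bijective fe,
      forall e, src (fe e) = fv (src e) & forall e, tgt (fe e) = fv (tgt e)].

(* Replacement systems  (G0, e -> R), with iv, tv the initial and      *)
(* terminal vertices of R (the endpoints v, w of the edge e).          *)
Record rsystem := RSys {
  G0 : graph;
  Rg : graph;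
  iv : V Rg;
  tv : V Rg
}.

Definition adjacent (G : graph) (x y : V G) : Prop :=
  exists e : E G, (src e = x /\ tgt e = y) \/ (src e = y /\ tgt e = x).

Definition expanding (S : rsystem) : Prop :=
  [/\ iv S <> tv S,                    (* e is a non-loop edge *)
      no_isolated (G0 S) /\ no_isolated (Rg S),
      ~ adjacent (iv S) (tv S),
      3 <= #|V (Rg S)| & 2 <= #|E (Rg S)| ].

Section Limit.
Variable S : rsystem.
Local Notation R := (Rg S).

(* Edges of expansions of G: words  e zeta_1 ... zeta_k. *)
Definition word (G : graph) := (E G * seq (E R))%type.

(* Vertices of expansions of G: vertices of G, or copies of interior   *)
(* vertices u of R created when replacing the edge (word) alpha.       *)
Inductive xvert (G : graph) :=
  | Base of V G
  | Inner of word G & V R.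

(* Endpoints of the edge  e (rev rs) of an expansion of G;  b = true   *)
(* for the initial vertex, b = false for the terminal vertex.          *)
Fixpoint xend_rev (G : graph) (b : bool) (e : E G) (rs : seq (E R)) : xvert G :=
  match rs with
  | [::] => @Base G (if b then src e else tgt e)
  | z :: rs' =>
      let u := if b then src z else tgt z in
      if u == iv S then xend_rev true e rs'
      else if u == tv S then xend_rev false e rs'
      else Inner (e, rev rs') u
  end.

Definition xend (G : graph) (b : bool) (w : word G) : xvert G :=
  xend_rev b w.1 (rev w.2).

Definition share (G : graph) (w w' : word G) : Prop :=
  exists b b', xend b w = xend b' w'.

Definition is_loop (G : graph) (w : word G) : Prop := xend true w = xend false w.

Definition Omega (G : graph) := (E G * (nat -> E R))%type.

(* The edge  w_0 w_1 ... w_n  of the n-fold full expansion. *)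
Definition prefix (G : graph) (n : nat) (w : Omega G) : word G :=
  (w.1, mkseq w.2 n).

Definition gluing (G : graph) (w w' : Omega G) : Prop :=
  forall n, share (prefix n w) (prefix n w').

(* X(G) = Omega_G / ~ : a point is an equivalence class. *)
Definition pt (G : graph) := {c : Omega G -> Prop | exists w, c = gluing w}.

Definition cls (G : graph) (w : Omega G) : pt G :=
  exist _ (gluing w) (ex_intro _ w erefl).

(* Quotient topology of the product topology (E(G), E(R) discrete). *)
Definition open_pt (G : graph) (U : pt G -> Prop) : Prop :=
  forall w, U (cls w) ->
    exists n, forall w', prefix n w' = prefix n w -> U (cls w').

Definition continuous_pt (G G' : graph) (f : pt G -> pt G') : Prop :=
  forall U, open_pt U -> open_pt (fun p => U (f p)).

Definition homeomorphism (G G' : graph) (f : pt G -> pt G') : Prop :=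
  exists g : pt G' -> pt G,
    [/\ cancel f g, cancel g f, continuous_pt f & continuous_pt g].

Definition wconcat (G : graph) (w : word G) (z : nat -> E R) : Omega G :=
  (w.1, fun i => if i < size w.2 then nth (z i) w.2 i else z (i - size w.2)).

Definition cell (G : graph) (w : word G) (p : pt G) : Prop :=
  exists z, p = cls (wconcat w z).

(* Image in X(G) of a vertex x of an expansion of G: the point given by *)
(* sequences all of whose (long enough) prefixes are incident to x.     *)
Definition vimg (G : graph) (x : xvert G) (p : pt G) : Prop :=
  exists w, p = cls w /\
    exists N, forall n, N <= n -> exists b, xend b (prefix n w) = x.

Definition interior (G : graph) (w : word G) (p : pt G) : Prop :=
  cell w p /\ ~ (exists b, vimg (xend b w) p).

Definition rearrangement (G G' : graph) (f : pt G -> pt G') : Prop :=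
  homeomorphism f /\
  exists (k : nat) (c : 'I_k -> word G * word G'),
    [/\ forall p, exists i, cell (c i).1 p,
        forall i j, i != j -> forall p, ~ (interior (c i).1 p /\ interior (c j).1 p),
        forall i, is_loop (c i).1 <-> is_loop (c i).2
      & forall i z, f (cls (wconcat (c i).1 z)) = cls (wconcat (c i).2 z)].

Definition base_iso (G1 G2 : graph) (b : pt G1 -> pt G2) : Prop :=
  exists (fv : V G1 -> V G2) (fe : E G1 -> E G2),
    is_iso fv fe /\ forall e z, b (cls (e, z)) = cls (fe e, z).

Definition range_equiv (G G1 G2 : graph) (f : pt G -> pt G1) (g : pt G -> pt G2) : Prop :=
  exists b : pt G1 -> pt G2, base_iso b /\ g = b \o f.

(* Stabilizer in the rearrangement group of the vertex [f] of K^1:     *)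
(* rearrangements g of X(G0) with [f] . g = [f o g] = [f].              *)
Definition stab (G : graph) (f : pt (G0 S) -> pt G) (g : pt (G0 S) -> pt (G0 S)) : Prop :=
  rearrangement g /\ range_equiv (f \o g) f.

End Limit.

(* An element g of the stabilizer of [f] satisfies f \o g = phi \o f for a base isomorphism
   phi of X(G), and phi is induced by an automorphism (fv, fe) of G.  As f is bijective,
   g = f^-1 \o phi \o f is determined by phi, and phi is determined by fe because distinct
   edges have distinct cells: a point whose address eventually runs into inner vertices of R
   lies in no other cell of the same depth.  So the stabilizer embeds in the finite group
   Aut(G), the vertex map being determined by fe when G has no isolated vertices.
   Conversely, for every automorphism, f^-1 \o phi \o f is a rearrangement: f and f^-1 map
   all sufficiently deep cells canonically onto cells, and the cells of one fixed depth
   cover X(G0) with pairwise disjoint interiors. *)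

From Pilot Require Import Defs.
From mathcomp Require Import all_boot zify.
From Stdlib Require Import Classical ClassicalEpsilon.
From Stdlib Require Import FunctionalExtensionality PropExtensionality ProofIrrelevance.

Set Implicit Arguments.
Unset Strict Implicit.
Unset Printing Implicit Defensive.

Lemma eventually_one_side (P : nat -> bool -> Prop) (D : nat) :
  (forall n, D <= n -> exists b, P n b) ->
  (forall n b, D <= n -> P n.+1 b -> P n b) ->
  exists b N, forall n, N <= n -> P n b.
Proof.
move=> someP downP.
have [allT|] := classic (forall n, D <= n -> P n true); first by exists true, D.
move=> /not_all_ex_not [N /(imply_to_and (D <= N)) [DN notPN]].
have notP m : ~ P (N + m) true.
  elim: m => [|m IHm]; first by rewrite addn0.
  by rewrite addnS => /(downP _ _ (leq_trans DN (leq_addr m N))).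
exists false, N => n Nn; have [[] Pn] := someP n (leq_trans DN Nn); last exact: Pn.
by case: (notP (n - N)); rewrite subnKC.
Qed.

Definition endpt (G : graph) (b : bool) (y : E G) : V G := if b then src y else tgt y.

Lemma exists_endpt (G : graph) (x : V G) : ~ isolated x -> exists y b, endpt b y = x.
Proof.
move=> /not_all_ex_not [y /not_and_or [/NNPP sy|/NNPP ty]]; first by exists y, true.
by exists y, false.
Qed.

Section Words.
Variable S : rsystem.
Local Notation R := (Rg S).

Definition wcat (G : graph) (w : word S G) (t : seq (E R)) : word S G := (w.1, w.2 ++ t).

Definition prepend (s : seq (E R)) (z : nat -> E R) : nat -> E R :=
  fun i => if i < size s then nth (z i) s i else z (i - size s).

Lemma xend_rcons (G : graph) b (e : E G) (s : seq (E R)) z :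
  xend b ((e, rcons s z) : word S G) =
  (let u := endpt b z in
   if u == iv S then xend true ((e, s) : word S G)
   else if u == tv S then xend false ((e, s) : word S G)
   else Inner (e, s) u).
Proof. by rewrite /xend /= rev_rcons /= revK. Qed.

Lemma xend_cat (G : graph) b (e : E G) (s t : seq (E R)) :
  (exists b', xend b ((e, s ++ t) : word S G) = xend b' ((e, s) : word S G)) \/
  exists k x, k < size t /\ xend b ((e, s ++ t) : word S G) = Inner (e, s ++ take k t) x.
Proof.
elim/last_ind: t b => [|t z IHt] b; first by left; exists b; rewrite cats0.
have IHt' b' : (exists b'', xend b' ((e, s ++ t) : word S G) = xend b'' ((e, s) : word S G)) \/
    exists k x, k < size (rcons t z) /\
      xend b' ((e, s ++ t) : word S G) = Inner (e, s ++ take k (rcons t z)) x.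
  case: (IHt b') => [|[k [x [kt ->]]]]; first by left.
  right; exists k, x; split; first by rewrite size_rcons ltnS ltnW.
  by rewrite -cats1 takel_cat ?(ltnW kt).
rewrite -rcons_cat xend_rcons /=; case: ifP => _; first exact: IHt'.
case: ifP => _; first exact: IHt'.
right; exists (size t), (endpt b z).
by rewrite size_rcons -cats1 take_size_cat.
Qed.

Lemma xend_Inner_size (G : graph) b (e : E G) (s : seq (E R)) (w : word S G) x :
  xend b ((e, s) : word S G) = Inner w x -> size w.2 < size s.
Proof.
have [[b' ->]|[k [y [ks ->]]]] := xend_cat b e [::] s; first by case: b'.
by case=> <- _; rewrite /= size_take ks.
Qed.

Definition inner (u : V R) : bool := (u != iv S) && (u != tv S).

Lemma iv_tv_or_inner (u : V R) : [\/ u = iv S, u = tv S | inner u].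
Proof.
rewrite /inner; case: (eqVneq u (iv S)) => [|/= ?]; first by constructor 1.
by case: (eqVneq u (tv S)); [constructor 2 | constructor 3].
Qed.

Hypothesis expS : expanding S.

Lemma exists_inner : exists u, inner u.
Proof.
case: (pickP inner) => [u|outer]; first by exists u.
case: expS => _ _ _ card3 _; exfalso.
have : #|V R| <= #|[set iv S; tv S]|.
  rewrite -cardsT; apply/subset_leq_card/subsetP => u _.
  by move: (outer u); rewrite /inner !inE => /negbT; rewrite negb_and !negbK.
by rewrite cards2 leqNgt (leq_trans _ card3) //; case: (_ == _).
Qed.

Lemma endpt_iv_tv (y : E R) b b' : endpt b y = iv S -> endpt b' y = tv S -> False.
Proof.
case: expS => ivtv _ nadj _ _ yb yb'.
case: b b' yb yb' => [] [] /= yb yb'; try by apply: ivtv; rewrite -yb -yb'.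
  by apply: nadj; exists y; left.
by apply: nadj; exists y; right.
Qed.

Lemma xend_Inner_pair (z z' : E R) :
  (forall b, endpt b z' = iv S -> inner (src z)) ->
  (forall b, endpt b z' = tv S -> inner (tgt z)) ->
  forall (G : graph) b (e : E G) s,
    exists t x, xend b ((e, s ++ [:: z; z']) : word S G) = Inner (e, s ++ t) x.
Proof.
move=> ivz tvz G b e s.
rewrite (_ : s ++ _ = rcons (rcons s z) z'); last by rewrite -!cats1 -catA.
rewrite xend_rcons /=; case: eqP => [/ivz /andP [zi zt]|_].
  by exists [::], (src z); rewrite xend_rcons /= (negbTE zi) (negbTE zt) cats0.
case: eqP => [/tvz /andP [zi zt]|_].
  by exists [::], (tgt z); rewrite xend_rcons /= (negbTE zi) (negbTE zt) cats0.
by exists [:: z], (endpt b z'); rewrite cats1.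
Qed.

Lemma exists_inner_suffix : exists z z' : E R, forall (G : graph) b (e : E G) s,
  exists t x, xend b ((e, s ++ [:: z; z']) : word S G) = Inner (e, s ++ t) x.
Proof.
have [u uin] := exists_inner; have [_ [_ noR] _ _ _] := expS.
have [z [bz zu]] := exists_endpt (noR u).
have [zi [bi zi_iv]] := exists_endpt (noR (iv S)).
have [zt [bt zt_tv]] := exists_endpt (noR (tv S)).
case: (boolP (inner (src z))) => [srcz|srczN].
  by exists z, zi; apply: xend_Inner_pair => // b /(endpt_iv_tv zi_iv).
have tgtz : inner (tgt z) by case: bz zu => /= zu; [rewrite zu uin in srczN | rewrite zu].
by exists z, zt; apply: xend_Inner_pair => // b /endpt_iv_tv /(_ zt_tv).
Qed.

(* Nonadjacency of iv and tv prevents a non-loop edge of R from closing up into a loop. *)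
Lemma is_loop_rcons (G : graph) (e : E G) s z :
  is_loop ((e, rcons s z) : word S G) <-> src z = tgt z.
Proof.
rewrite /is_loop !xend_rcons /=; split=> [|->] //.
have notInner b x : xend b ((e, s) : word S G) <> Inner (e, s) x.
  by move=> /xend_Inner_size; rewrite ltnn.
have tvN : (tv S == iv S) = false by case: expS => ivtv _ _ _ _; apply/eqP => /esym.
case: (iv_tv_or_inner (src z)) => [si|si|/andP [si1 si2]];
case: (iv_tv_or_inner (tgt z)) => [ti|ti|/andP [ti1 ti2]];
  rewrite ?si ?ti ?eqxx ?tvN ?(negbTE si1) ?(negbTE si2) ?(negbTE ti1) ?(negbTE ti2);
  first [ done | by move=> /notInner | by move=> /esym /notInner
        | by case: (endpt_iv_tv (b := true) (b' := false) si ti)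
        | by case: (endpt_iv_tv (b := false) (b' := true) ti si) | by case ].
Qed.

Lemma wconcatE (G : graph) (w : word S G) z : wconcat w z = (w.1, prepend w.2 z).
Proof. by []. Qed.

Lemma prepend_cat s t z : prepend (s ++ t) z = prepend s (prepend t z).
Proof.
apply: functional_extensionality => i; rewrite /prepend size_cat nth_cat.
case: (ltnP i (size s)) => si; first by rewrite ltn_addr //; apply: set_nth_default.
rewrite -(subnKC si) ltn_add2l addKn subnDA.
by case: ltnP => ti; [apply: set_nth_default | rewrite addKn].
Qed.

Lemma prepend_nil z : prepend [::] z = z.
Proof. by apply: functional_extensionality => i; rewrite /prepend subn0. Qed.

Lemma wconcat_wcat (G : graph) (w : word S G) t z :
  wconcat (wcat w t) z = wconcat w (prepend t z).
Proof. by rewrite !wconcatE prepend_cat. Qed.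

Lemma mkseq_prepend s z n : size s <= n -> mkseq (prepend s z) n = s ++ mkseq z (n - size s).
Proof.
move=> sn; rewrite /mkseq -(subnKC sn) iotaD map_cat add0n addKn; congr (_ ++ _).
  rewrite -[RHS](mkseq_nth (z 0) s) /mkseq; apply/eq_in_map => i.
  by rewrite mem_iota add0n /prepend => /= si; rewrite si; apply: set_nth_default.
rewrite -{1}[size s]addn0 iotaDl -map_comp; apply: eq_map => i /=.
by rewrite /prepend ltnNge leq_addr addKn.
Qed.

Lemma prefix_wconcat (G : graph) (w : word S G) z n : size w.2 <= n ->
  Defs.prefix n (wconcat w z) = wcat w (mkseq z (n - size w.2)).
Proof. by move=> wn; rewrite /Defs.prefix /= -/(prepend w.2 z) mkseq_prepend. Qed.

Lemma wconcat_prefix (G : graph) (w : Omega S G) n :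
  wconcat (Defs.prefix n w) (fun i => w.2 (i + n)) = w.
Proof.
case: w => e z; rewrite /wconcat /Defs.prefix /=; congr (_, _).
apply: functional_extensionality => i; rewrite size_mkseq.
by case: ltnP => ni; [rewrite nth_mkseq | rewrite subnK].
Qed.

Lemma prefixS (G : graph) (w : Omega S G) n :
  Defs.prefix n.+1 w = ((w.1, rcons (Defs.prefix n w).2 (w.2 n)) : word S G).
Proof. by rewrite /Defs.prefix /= mkseqS. Qed.

Lemma gluing_refl (G : graph) (w : Omega S G) : gluing w w.
Proof. by move=> n; exists true, true. Qed.

Lemma cls_gluing (G : graph) (w w' : Omega S G) : cls w = cls w' -> gluing w w'.
Proof. by move=> /(congr1 sval) /= ->; apply: gluing_refl. Qed.

Lemma exists_cls (G : graph) (p : pt S G) : exists w, p = cls w.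
Proof. by case: p => c [w cw]; exists w; apply: subset_eq_compat. Qed.

(* After the suffix [:: z1; z2], both endpoints of the prefix of depth |u| + 2 are inner
   vertices of a copy of R below u, which only words extending u can touch. *)
Lemma exists_generic_tail (G : graph) (u : word S G) : exists z,
  forall (v : word S G) y, size v.2 <= size u.2 ->
    cls (wconcat u z) = cls (wconcat v y) -> exists t, u = wcat v t.
Proof.
have [z1 [z2 deep]] := exists_inner_suffix.
exists (prepend [:: z1; z2] (fun=> z1)) => v y vu /cls_gluing /(_ (size u.2 + 2)) [b [b' eq]].
rewrite -wconcat_wcat !prefix_wconcat ?size_cat ?(leq_trans vu) ?leq_addr // in eq.
rewrite /wcat /= subnn cats0 in eq.
have [t [x eq_u]] := deep G b u.1 u.2; rewrite eq_u in eq.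
have [[b'' eq_v]|[k [x' [_ eq_v]]]] := xend_cat b' v.1 v.2 (mkseq y (size u.2 + 2 - size v.2)).
  move: (xend_Inner_size (esym (etrans eq eq_v))).
  by rewrite size_cat ltnNge (leq_trans vu) ?leq_addr.
rewrite eq_v in eq; case: eq => eq_e eq_seq _.
have take_u : take (size v.2) u.2 = v.2.
  by move: (congr1 (take (size v.2)) eq_seq); rewrite takel_cat // take_size_cat.
exists (drop (size v.2) u.2).
by rewrite /wcat -[X in X ++ _]take_u cat_take_drop -eq_e; case: (u).
Qed.

Lemma xend_rcons_short (G : graph) b b0 (e e0 : E G) s s0 z : size s0 <= size s ->
  xend b ((e, rcons s z) : word S G) = xend b0 ((e0, s0) : word S G) ->
  exists b', xend b' ((e, s) : word S G) = xend b0 ((e0, s0) : word S G).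
Proof.
move=> s0s; rewrite xend_rcons /=; case: eqP => _; first by exists true.
case: eqP => _; first by exists false.
by move=> /esym /xend_Inner_size /=; rewrite ltnNge s0s.
Qed.

(* Beyond depth |d| the prefixes of a common point touch an endpoint of d, and touching an
   endpoint is inherited by shorter prefixes. *)
Lemma cells_meet_at_endpoint (G : graph) (d d' : word S G) p :
  size d.2 = size d'.2 -> d <> d' -> cell d p -> cell d' p -> exists b, vimg (xend b d) p.
Proof.
case: d => e s; case: d' => e' s' /= ss' neq [z pz] [z' pz'].
have glue : gluing (wconcat (e, s) z) (wconcat (e', s') z').
  by apply: cls_gluing; rewrite -pz -pz'.
set W := wconcat (e, s) z in pz glue.
pose touches n b1 := exists b, xend b (Defs.prefix n W) = xend b1 ((e, s) : word S G).
have [b1 [N touchN]] : exists b1 N, forall n, N <= n -> touches n b1.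
  apply: (eventually_one_side (D := size s)) => [n sn|n b1 sn [b]].
    have [b [b' eqn]] := glue n.
    rewrite /W !prefix_wconcat -?ss' // /wcat /= in eqn *.
    have [[b1 E1]|[k [x [_ E1]]]] := xend_cat b e s (mkseq z (n - size s)).
      by exists b1, b; rewrite /W prefix_wconcat.
    have [[b2 E2]|[k' [x' [_ E2]]]] := xend_cat b' e' s' (mkseq z' (n - size s)).
      move: (xend_Inner_size (esym (etrans (esym E1) (etrans eqn E2)))).
      by rewrite size_cat -ss' ltnNge leq_addr.
    rewrite E1 E2 in eqn; case: eqn => ee' eqs _; case: neq.
    move: (congr1 (take (size s)) eqs).
    by rewrite take_size_cat // ss' take_size_cat // => ->; rewrite ee'.
  rewrite prefixS => /xend_rcons_short; apply.
  by rewrite /Defs.prefix size_mkseq.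
by exists b1, W; split => //; exists N.
Qed.
End Words.

Section BaseMaps.
Variable S : rsystem.

Lemma continuous_pt_comp (G1 G2 G3 : graph) (f : pt S G1 -> pt S G2) (g : pt S G2 -> pt S G3) :
  continuous_pt f -> continuous_pt g -> continuous_pt (g \o f).
Proof. by move=> fc gc U /gc /fc. Qed.

Section Iso.
Variables (G1 G2 : graph) (fv : V G1 -> V G2) (fe : E G1 -> E G2).
Hypothesis iso : is_iso fv fe.

Definition xvert_map (x : xvert S G1) : xvert S G2 :=
  match x with
  | Base y => Base S (fv y)
  | Inner w u => Inner (fe w.1, w.2) u
  end.

Lemma xend_map b e s :
  xend b ((fe e, s) : word S G2) = xvert_map (xend b ((e, s) : word S G1)).
Proof.
case: iso => _ _ fe_src fe_tgt; elim/last_ind: s b => [|s z IHs] b.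
  by case: b; rewrite /xend /= ?fe_src ?fe_tgt.
by rewrite !xend_rcons /=; case: eqP => _; [|case: eqP].
Qed.

Lemma xvert_map_inj : injective xvert_map.
Proof.
case: iso => /bij_inj fv_inj /bij_inj fe_inj _ _.
by case=> [x|[e s] u] [y|[e' s'] u'] //= [] => [/fv_inj ->|/fe_inj -> -> ->].
Qed.

Definition omap (w : Omega S G1) : Omega S G2 := (fe w.1, w.2).

Lemma gluing_omap w w' : gluing (omap w) (omap w') <-> gluing w w'.
Proof.
case: w w' => e z [e' z']; rewrite /gluing /share /Defs.prefix /=.
split=> glue n; have [b [b' eqn]] := glue n; exists b, b'.
  by apply: xvert_map_inj; rewrite -!xend_map.
by rewrite !xend_map eqn.
Qed.

Definition rep (p : pt S G1) : Omega S G1 :=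
  sval (constructive_indefinite_description _ (exists_cls p)).

Lemma rep_cls p : p = cls (rep p).
Proof. exact: (svalP (constructive_indefinite_description _ (exists_cls p))). Qed.

Definition base_map (p : pt S G1) : pt S G2 := cls (omap (rep p)).

Lemma base_map_cls w : base_map (cls w) = cls (omap w).
Proof.
rewrite /base_map; have /(congr1 sval) /= glue := rep_cls (cls w).
have [ge feK geK] : bijective fe by case: iso.
apply: subset_eq_compat; apply: functional_extensionality => v.
have -> : v = omap (ge v.1, v.2) by case: v => e z; rewrite /omap geK.
by apply: propositional_extensionality; rewrite !gluing_omap glue.
Qed.

Lemma base_iso_base_map : base_iso base_map.
Proof. by exists fv, fe; split => // e z; rewrite base_map_cls. Qed.

Lemma base_mapE (b : pt S G1 -> pt S G2) :
  (forall e z, b (cls (e, z)) = cls (fe e, z)) -> b = base_map.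
Proof.
move=> bE; apply: functional_extensionality => p.
by have [[e z] ->] := exists_cls p; rewrite bE base_map_cls.
Qed.

Lemma continuous_base_map : continuous_pt base_map.
Proof.
move=> U openU w; rewrite base_map_cls => /openU [n Un]; exists n => w' ww'.
by rewrite base_map_cls; apply: Un; move: ww'; rewrite /Defs.prefix /=; case=> -> ->.
Qed.

End Iso.

Lemma is_iso_comp (G1 G2 G3 : graph) (fv : V G1 -> V G2) fe (gv : V G2 -> V G3) ge :
  is_iso fv fe -> is_iso gv ge -> is_iso (gv \o fv) (ge \o fe).
Proof.
case=> fv_bij fe_bij fe_src fe_tgt [gv_bij ge_bij ge_src ge_tgt].
split; try exact: bij_comp.
  by move=> e /=; rewrite ge_src fe_src.
by move=> e /=; rewrite ge_tgt fe_tgt.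
Qed.

Lemma is_iso_inv (G1 G2 : graph) (fv : V G1 -> V G2) fe : is_iso fv fe ->
  exists gv ge, [/\ is_iso gv ge, cancel fe ge & cancel ge fe].
Proof.
case=> [[gv fvK gvK] [ge feK geK] fe_src fe_tgt]; exists gv, ge; split => //.
split; [exact: (Bijective gvK fvK) | exact: (Bijective geK feK) | |].
  by move=> e; apply: (can_inj fvK); rewrite -fe_src geK gvK.
by move=> e; apply: (can_inj fvK); rewrite -fe_tgt geK gvK.
Qed.

Lemma base_map_comp (G1 G2 G3 : graph) (fv : V G1 -> V G2) fe (gv : V G2 -> V G3) ge :
  is_iso fv fe -> is_iso gv ge -> base_map ge \o base_map fe = base_map (ge \o fe).
Proof.
move=> isof isog; apply: functional_extensionality => p.
have [[e z] ->] := exists_cls p.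
by rewrite /= (base_map_cls isof) (base_map_cls isog) (base_map_cls (is_iso_comp isof isog)).
Qed.

Lemma base_map_id (G : graph) : base_map (@id (E G)) = id.
Proof.
have isoid : is_iso (@id (V G)) (@id (E G)) by split => //; exists id.
apply: functional_extensionality => p.
by have [[e z] ->] := exists_cls p; rewrite (base_map_cls isoid).
Qed.

Lemma base_map_inv (G1 G2 : graph) (fv : V G1 -> V G2) fe : is_iso fv fe ->
  exists gv ge,
    [/\ is_iso gv ge, cancel (base_map fe) (base_map ge) & cancel (base_map ge) (base_map fe)].
Proof.
move=> isof; have [gv [ge [isog feK geK]]] := is_iso_inv isof; exists gv, ge.
split=> // p; rewrite -[base_map _ (base_map _ p)]/((_ \o _) p).
  rewrite (base_map_comp isof isog) (_ : ge \o fe = id) ?base_map_id //.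
  exact: functional_extensionality.
rewrite (base_map_comp isog isof) (_ : fe \o ge = id) ?base_map_id //.
exact: functional_extensionality.
Qed.

End BaseMaps.

Section Cells.
Variable S : rsystem.
Local Notation R := (Rg S).
Hypothesis expS : expanding S.

Lemma is_loop_wcat (G1 G2 : graph) (w1 : word S G1) (w2 : word S G2) t :
  (is_loop w1 <-> is_loop w2) -> (is_loop (wcat w1 t) <-> is_loop (wcat w2 t)).
Proof.
case: w1 w2 => e1 s1 [e2 s2] loops; case/lastP: t => [|t z]; first by rewrite /wcat !cats0.
by rewrite /wcat /= -!rcons_cat !is_loop_rcons.
Qed.

Lemma is_loop_map (G1 G2 : graph) (fv : V G1 -> V G2) fe e s : is_iso fv fe ->
  is_loop ((fe e, s) : word S G2) <-> is_loop ((e, s) : word S G1).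
Proof.
move=> iso; rewrite /is_loop !(xend_map iso); split => [|-> //].
exact: (xvert_map_inj iso).
Qed.

Lemma cls_eq_edge (G : graph) (e e' : E G) :
  (forall z, cls ((e, z) : Omega S G) = cls (e', z)) -> e = e'.
Proof.
move=> ee'; have [z zgen] := exists_generic_tail expS ((e', [::]) : word S G).
have [|t [->]] // := zgen (e, [::]) z (leqnn 0).
by rewrite /wconcat /= -/(prepend [::] z) prepend_nil.
Qed.

Lemma base_map_inj (G1 G2 : graph) (fv fv' : V G1 -> V G2) fe fe' :
  is_iso fv fe -> is_iso fv' fe' -> base_map fe = base_map fe' :> (pt S G1 -> pt S G2) -> fe = fe'.
Proof.
move=> iso iso' eqb; apply: functional_extensionality => e; apply: cls_eq_edge => z.
by move: (congr1 (fun b => b (cls (e, z))) eqb); rewrite /= (base_map_cls iso) (base_map_cls iso').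
Qed.

Definition maps_cell (G1 G2 : graph) (h : pt S G1 -> pt S G2) (w1 : word S G1) (w2 : word S G2) :=
  (is_loop w1 <-> is_loop w2) /\ forall z, h (cls (wconcat w1 z)) = cls (wconcat w2 z).

Section MapsCell.
Variables (G1 G2 G3 : graph) (w1 : word S G1) (w2 : word S G2) (w3 : word S G3).

Lemma maps_cell_comp h h' : maps_cell h w1 w2 -> maps_cell h' w2 w3 -> maps_cell (h' \o h) w1 w3.
Proof.
case=> loop12 h12 [loop23 h23]; split=> [|z]; first by rewrite loop12.
by rewrite /= h12 h23.
Qed.

Lemma maps_cell_wcat h t : maps_cell h w1 w2 -> maps_cell h (wcat w1 t) (wcat w2 t).
Proof.
case=> loops hw; split=> [|z]; first exact: is_loop_wcat.
by rewrite !wconcat_wcat.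
Qed.

Lemma maps_cell_inv h hinv : cancel h hinv -> maps_cell h w1 w2 -> maps_cell hinv w2 w1.
Proof. by move=> hK [loops hw]; split=> [|z]; rewrite ?loops // -hw hK. Qed.

End MapsCell.

Lemma maps_cell_base_map (G1 G2 : graph) (fv : V G1 -> V G2) fe (w : word S G1) :
  is_iso fv fe -> maps_cell (base_map fe) w (fe w.1, w.2).
Proof.
case: w => e s iso; split=> [|z]; first by rewrite (is_loop_map _ _ iso).
by rewrite (base_map_cls iso).
Qed.

Lemma cover_wcat (G : graph) k (d : 'I_k -> word S G) (w : word S G) :
  (forall p, exists i, cell (d i) p) -> \max_(i < k) size (d i).2 <= size w.2 ->
  exists i t, w = wcat (d i) t.
Proof.
move=> cover long; have [z zgen] := exists_generic_tail expS w.
have [i [y wy]] := cover (cls (wconcat w z)); exists i.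
apply: zgen wy; exact: leq_trans (leq_bigmax (F := fun i => size (d i).2) i) long.
Qed.

Lemma rearrangement_long_cells (G1 G2 : graph) (f : pt S G1 -> pt S G2) finv :
  rearrangement f -> cancel finv f -> exists N,
    (forall w, N <= size w.2 -> exists w', maps_cell f w w' /\ size w.2 <= size w'.2 + N) /\
    (forall w', N <= size w'.2 -> exists w, maps_cell f w w').
Proof.
case=> _ [k [c [cover _ loops hc]]] finvK.
have hcell i : maps_cell f (c i).1 (c i).2 by split; [exact: loops | exact: hc].
set N1 := \max_(i < k) size (c i).1.2; set N2 := \max_(i < k) size (c i).2.2.
have cover2 q : exists i, cell (c i).2 q.
  by have [i [y qy]] := cover (finv q); exists i, y; rewrite -(finvK q) qy hc.
exists (N1 + N2); split => [w|w'] long.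
  have [i [t ->]] := cover_wcat (d := fun i => (c i).1) cover (leq_trans (leq_addr _ _) long).
  exists (wcat (c i).2 t); split; first exact: maps_cell_wcat.
  have := leq_bigmax (F := fun i => size (c i).1.2) i; rewrite /wcat !size_cat -/N1; lia.
have [j [t ->]] := cover_wcat (d := fun i => (c i).2) cover2 (leq_trans (leq_addl _ _) long).
by exists (wcat (c j).1 t); apply: maps_cell_wcat.
Qed.

Lemma rearrangement_of_uniform_cells (G1 G2 : graph) (h : pt S G1 -> pt S G2) D :
  homeomorphism h -> (forall w : word S G1, size w.2 = D -> exists w', maps_cell h w w') ->
  rearrangement h.
Proof.
move=> homeo hcells; split => //.
pose T := (E G1 * D.-tuple (E R))%type.
pose dw (t : T) : word S G1 := (t.1, val t.2).
pose img t := sval (constructive_indefinite_description _ (hcells (dw t) (size_tuple t.2))).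
have imgP t : maps_cell h (dw t) (img t).
  exact: svalP (constructive_indefinite_description _ (hcells (dw t) (size_tuple t.2))).
exists #|{: T}|, (fun i => (dw (enum_val i), img (enum_val i))); split.
- move=> p; have [w ->] := exists_cls p.
  pose tw : T := (w.1, Tuple (introT eqP (size_mkseq w.2 D))).
  exists (enum_rank tw); rewrite /= enum_rankK; exists (fun i => w.2 (i + D)).
  by rewrite -{1}(wconcat_prefix w D).
- move=> i j ij p [[pi no_i] [pj _]]; apply: no_i; apply: (cells_meet_at_endpoint _ _ pi pj).
    by rewrite /dw /= !size_tuple.
  move: ij; rewrite /dw; case E_i: (enum_val i) => [a ta]; case E_j: (enum_val j) => [a' ta'].
  apply: contra_neq_not => /= [[eqa /val_inj eqt]].
  by apply: enum_val_inj; rewrite E_i E_j eqa eqt.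
- by move=> i; case: (imgP (enum_val i)).
- by move=> i z; case: (imgP (enum_val i)).
Qed.

Lemma rearrangement_conj (G1 G2 : graph) (f : pt S G1 -> pt S G2) finv (fv : V G2 -> V G2) fe :
  rearrangement f -> cancel f finv -> is_iso fv fe -> rearrangement (finv \o base_map fe \o f).
Proof.
move=> hf fK iso; have [g [fg gf fc gc]] := hf.1.
have -> : finv = g by apply: functional_extensionality => q; rewrite -{1}(gf q) fK.
have [gv [ge [isog feK geK]]] := base_map_inv S iso.
have [N [long long']] := rearrangement_long_cells hf gf.
(* f sends a cell of depth 2N onto one of depth at least N, itself the image under f of a
   cell. *)
apply: (rearrangement_of_uniform_cells (D := N + N)) => [|w sizew].
  exists (g \o base_map ge \o f); split => [p|q||].
  - by rewrite /= gf feK fg.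
  - by rewrite /= gf geK fg.
  - exact: continuous_pt_comp fc (continuous_pt_comp (continuous_base_map iso) gc).
  - exact: continuous_pt_comp fc (continuous_pt_comp (continuous_base_map isog) gc).
have /long [w' [fw' sizew']] : N <= size w.2 by rewrite sizew leq_addr.
have /(long' (fe w'.1, w'.2)) [u fu] : N <= size w'.2 by rewrite -(leq_add2r N) -sizew.
exists u; apply: maps_cell_comp fw' _.
exact: maps_cell_comp (maps_cell_base_map _ iso) (maps_cell_inv fg fu).
Qed.

End Cells.

Lemma is_iso_vertex_unique (G1 G2 : graph) (fv fv' : V G1 -> V G2) fe :
  no_isolated G1 -> is_iso fv fe -> is_iso fv' fe -> fv = fv'.
Proof.
move=> noiso [_ _ fe_src fe_tgt] [_ _ fe_src' fe_tgt']; apply: functional_extensionality => x.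
have [y [[] <-]] := exists_endpt (noiso x); first by rewrite /= -fe_src fe_src'.
by rewrite /= -fe_tgt fe_tgt'.
Qed.

Lemma In_mem (T : eqType) (x : T) (s : seq T) : x \in s -> List.In x s.
Proof. by elim: s => //= y s IHs; rewrite in_cons => /orP [/eqP ->|/IHs]; [left|right]. Qed.

Section Stabilizer.
Variables (S : rsystem) (G : graph) (f : pt S (G0 S) -> pt S G).
Hypotheses (expS : expanding S) (hf : rearrangement f).

Definition acts_by (g : pt S (G0 S) -> pt S (G0 S)) (fv : V G -> V G) (fe : E G -> E G) :=
  is_iso fv fe /\ f \o g = base_map fe \o f.

Lemma stab_acts_by g : stab f g -> exists fv fe, acts_by g fv fe.
Proof.
case=> _ [b [[fv [fe [iso bE]]] fE]]; rewrite (base_mapE iso bE) in fE.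
have [gv [ge [isog feK _]]] := base_map_inv S iso; exists gv, ge; split => //.
by apply: functional_extensionality => p /=; rewrite {2}fE /= feK.
Qed.

Lemma acts_by_inj g g' fv fv' fe : acts_by g fv fe -> acts_by g' fv' fe -> g = g'.
Proof.
have [finv [fK _ _ _]] := hf.1; case=> _ gE [_ g'E].
apply: functional_extensionality => p; rewrite -(fK (g p)) -(fK (g' p)).
by move: (congr1 (@^~ p) gE) (congr1 (@^~ p) g'E) => /= -> ->.
Qed.

Lemma acts_by_unique g fv fv' fe fe' : no_isolated G ->
  acts_by g fv fe -> acts_by g fv' fe' -> fv = fv' /\ fe = fe'.
Proof.
have [finv [_ finvK _ _]] := hf.1; move=> noiso [iso gE] [iso' gE'].
have eq_fe : fe = fe'.
  apply: (base_map_inj expS iso iso'); apply: functional_extensionality => q.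
  rewrite -(finvK q).
  by move: (congr1 (@^~ (finv q)) gE) (congr1 (@^~ (finv q)) gE') => /= <- <-.
by subst fe'; split => //; apply: is_iso_vertex_unique noiso iso iso'.
Qed.

Lemma acts_by_comp g h fv fe fv' fe' : acts_by g fv fe -> acts_by h fv' fe' ->
  acts_by (g \o h) (fv \o fv') (fe \o fe').
Proof.
move=> [iso gE] [iso' hE]; split; first exact: is_iso_comp.
rewrite -(base_map_comp S iso' iso); apply: functional_extensionality => p /=.
by move: (congr1 (@^~ (h p)) gE) (congr1 (@^~ p) hE) => /= -> ->.
Qed.

Lemma stab_conj finv fv fe : cancel f finv -> cancel finv f -> is_iso fv fe ->
  stab f (finv \o base_map fe \o f) /\ acts_by (finv \o base_map fe \o f) fv fe.
Proof.
move=> fK finvK iso; have [gv [ge [isog feK _]]] := base_map_inv S iso.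
have actsE : f \o (finv \o base_map fe \o f) = base_map fe \o f.
  by apply: functional_extensionality => p /=; rewrite finvK.
split; last by split.
split; first exact: (rearrangement_conj expS hf fK iso).
exists (base_map ge); split; first exact: base_iso_base_map isog.
by rewrite actsE; apply: functional_extensionality => p /=; rewrite feK.
Qed.

Lemma stab_finite : exists s : list (pt S (G0 S) -> pt S (G0 S)), forall g, stab f g -> List.In g s.
Proof.
pose pick (F : {ffun E G -> E G}) := epsilon (inhabits id) (fun g => exists fv, acts_by g fv F).
exists (map pick (enum {ffun E G -> E G})) => g /stab_acts_by [fv [fe act]].
pose F := [ffun x => fe x].
have eF : (F : E G -> E G) = fe by apply: functional_extensionality => x; rewrite ffunE.
have [fv' act'] : exists fv', acts_by (pick F) fv' F.
  by apply: (epsilon_spec _ (fun g => exists fv, acts_by g fv F)); exists g, fv; rewrite eF.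
rewrite eF in act'; rewrite (acts_by_inj act act').
by apply/List.in_map/In_mem; rewrite mem_enum.
Qed.

Definition stab_iso g : (V G -> V G) * (E G -> E G) :=
  epsilon (inhabits (id, id)) (fun ph => acts_by g ph.1 ph.2).

Lemma stab_isoP g : stab f g -> acts_by g (stab_iso g).1 (stab_iso g).2.
Proof.
move=> /stab_acts_by [fv [fe act]].
by apply: (epsilon_spec _ (fun ph => acts_by g ph.1 ph.2)); exists (fv, fe).
Qed.

Lemma stab_isoE g fv fe : no_isolated G -> acts_by g fv fe -> stab_iso g = (fv, fe).
Proof.
move=> noiso act; have act' : acts_by g (stab_iso g).1 (stab_iso g).2.
  by apply: (epsilon_spec _ (fun ph => acts_by g ph.1 ph.2)); exists (fv, fe).
by have [<- <-] := acts_by_unique noiso act' act; case: (stab_iso g).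
Qed.

End Stabilizer.

From Stdlib Require Import List.

Theorem proposition3p10 (S : rsystem) :
  expanding S ->
  forall (G : graph) (f : pt S (G0 S) -> pt S G),
    rearrangement f ->
    (* properness: vertex stabilizers are finite *)
    (exists s : list (pt S (G0 S) -> pt S (G0 S)),
        forall g, stab f g -> In g s) /\
    (* the stabilizer of [f] is isomorphic to Aut(G) *)
    (no_isolated G ->
     exists Phi : (pt S (G0 S) -> pt S (G0 S)) -> ((V G -> V G) * (E G -> E G)),
       [/\ forall g, stab f g -> is_iso (Phi g).1 (Phi g).2,
           forall g h, stab f g -> stab f h -> Phi g = Phi h -> g = h,
           forall fv fe, is_iso fv fe -> exists g, stab f g /\ Phi g = (fv, fe)
         & forall g h, stab f g -> stab f h ->
             Phi (g \o h) = ((Phi g).1 \o (Phi h).1, (Phi g).2 \o (Phi h).2)]).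
Proof.
move=> expS G f hf; split; first exact: stab_finite.
move=> noiso; exists (stab_iso f); split.
- by move=> g /stab_isoP [].
- move=> g h /stab_isoP act_g /stab_isoP act_h eq_gh.
  by rewrite -eq_gh in act_h; apply: (acts_by_inj hf act_g act_h).
- move=> fv fe iso; have [finv [fK finvK _ _]] := hf.1.
  have [stab_g act_g] := stab_conj expS hf fK finvK iso.
  by exists (finv \o base_map fe \o f); split; last exact: stab_isoE.
- move=> g h /stab_isoP act_g /stab_isoP act_h.
  exact: stab_isoE noiso (acts_by_comp act_g act_h).
Qed.
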